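(* Let $R$ be a commutative ring, $C=(c_{ij})_{i,j=1}^n$ a matrix with entries in $R$, and ${\bf a}=(a_i)_{i=1}^n$, ${\bf b}=(b_i)_{i=1}^n$ vectors with entries in $R$. Then $$\det({\bf a}{\bf b}^{\mathrm T}-C)=\det(-C)+\sum_{\vec G}(-1)^{\#(\text{cycles of }\vec G)}\,b_{s(\vec G)}\,a_{t(\vec G)}\prod_{ij\in E(\vec G)}c_{ij},$$ where the sum runs over all directed graphs $\vec G$ on the vertex set $\{1,\ldots,n\}$ in which one connected component is a directed path (possibly of length $0$, i.e. an isolated vertex) from a source $s(\vec G)$ to a sink $t(\vec G)$ and all other connected components are directed cycles (possibly of length $1$, i.e. a loop $ii$).
   Context: In a directed graph, $ij\in E(\vec G)$ denotes a directed edge from $i$ to $j$ (a loop $ii$ contributes $c_{ii}$). Every vertex of $\{1,\ldots,n\}$ belongs to exactly one component of $\vec G$. The determinant is $\det A=\sum_{\pi}\mathrm{sgn}(\pi)\prod_i a_{i\pi(i)}$. *)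

From mathcomp Require Import all_boot all_order all_algebra all_fingroup.
Set Implicit Arguments. Unset Strict Implicit. Unset Printing Implicit Defensive.
Import GRing.Theory.

(* A directed graph on the vertex set 'I_n (= {1,...,n}) is given by its set
   of directed edges E : {set 'I_n * 'I_n}; (i, j) \in E is the edge ij,
   and (i, i) is a loop. *)

Definition path_edges (T : Type) (p : seq T) : seq (T * T) :=
  if p is x :: p' then zip (x :: p') p' else [::].

Definition cycle_edges (T : Type) (c : seq T) : seq (T * T) :=
  if c is x :: c' then zip (x :: c') (rcons c' x) else [::].

(* E is a graph whose connected components are one directed path
   (vertex sequence p, possibly a single vertex) from source s to sink t,
   and directed cycles (vertex sequences in cs); the vertex sets of these
   components partition {1,...,n}. *)
Definition path_cycle_graph (n : nat) (E : {set 'I_n * 'I_n}) (s t : 'I_n) : Prop :=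
  exists (p : seq 'I_n) (cs : seq (seq 'I_n)),
    [/\ perm_eq (p ++ flatten cs) (enum 'I_n),
        exists p', p = s :: p' /\ last s p' = t,
        all (fun c => c != [::]) cs &
        E = [set e | (e \in path_edges p) || has (fun c => e \in cycle_edges c) cs]].

Definition wadj (n : nat) (E : {set 'I_n * 'I_n}) : rel 'I_n :=
  fun u v => ((u, v) \in E) || ((v, u) \in E).

Definition ncomponents (n : nat) (E : {set 'I_n * 'I_n}) : nat :=
  n_comp (wadj E) 'I_n.

(* For a path-cycle graph, all components but the path one are cycles. *)
Definition ncycles (n : nat) (E : {set 'I_n * 'I_n}) : nat :=
  (ncomponents E).-1.

From Stdlib Require Import ClassicalEpsilon.
Definition path_cycle_graphb (n : nat) (E : {set 'I_n * 'I_n}) (s t : 'I_n) : bool :=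
  if excluded_middle_informative (path_cycle_graph E s t) then true else false.

From mathcomp Require Import all_boot all_order all_algebra all_fingroup.
Set Implicit Arguments. Unset Strict Implicit. Unset Printing Implicit Defensive.
Import GRing.Theory.

Section CycleEdges.
Variable T : eqType.
Implicit Types (x u v : T) (p c : seq T).

Lemma cycle_edges_next c : uniq c -> cycle_edges c = [seq (x, next c x) | x <- c].
Proof.
case: c => [|x p] // Uc; apply: (@eq_from_nth _ (x, x)).
  by rewrite size_zip size_map size_rcons minnn.
rewrite size_zip size_rcons minnn => i ltip.
have xi_c : nth x (x :: p) i \in x :: p by apply: mem_nth.
rewrite nth_zip ?size_rcons // (nth_map x) // next_nth xi_c index_uniq //.
by rewrite nth_rcons; case: ltnP => // le_p_i; rewrite (nth_default x le_p_i) if_same.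
Qed.

Lemma cycle_edges_rcons x p :
  cycle_edges (x :: p) = rcons (path_edges (x :: p)) (last x p, x).
Proof.
rewrite /cycle_edges /path_edges.
by elim: p x {2 5}x => [|y p IHp] x z //=; rewrite IHp.
Qed.

Lemma mem_cycle_edges c u v :
  uniq c -> ((u, v) \in cycle_edges c) = (u \in c) && (v == next c u).
Proof.
move=> Uc; rewrite cycle_edges_next //; apply/mapP/andP => [[y yc [-> ->]] | [uc /eqP ->]].
  by rewrite yc.
by exists u.
Qed.

Lemma next_last x p : uniq (x :: p) -> next (x :: p) (last x p) = x.
Proof.
move=> Up; have := mem_cycle_edges (last x p) x Up.
by rewrite cycle_edges_rcons mem_rcons inE eqxx => /esym/andP[_ /eqP].
Qed.

Lemma mem_path_edges x p u v : uniq (x :: p) ->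
  ((u, v) \in path_edges (x :: p)) =
  [&& u \in x :: p, u != last x p & v == next (x :: p) u].
Proof.
move=> Up; rewrite andbCA -mem_cycle_edges // cycle_edges_rcons mem_rcons inE.
have Ufst : uniq (map fst (cycle_edges (x :: p))).
  by rewrite cycle_edges_next // -map_comp map_id.
have [uv_p | uv_p] := boolP ((u, v) \in path_edges (x :: p)); last first.
  by rewrite orbF andbC; case: eqP => // -[uE _]; rewrite uE eqxx.
rewrite orbT andbT; apply/esym; apply: contraTneq Ufst => u_last.
by rewrite cycle_edges_rcons map_rcons rcons_uniq -u_last (map_f fst uv_p).
Qed.

End CycleEdges.
Section Blocks.
Variable T : eqType.
Implicit Types (x : T) (c : seq T) (L : seq (seq T)).

Lemma uniq_flatten_mem L c : uniq (flatten L) -> c \in L -> uniq c.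
Proof.
elim: L => [|c' L IHL] //=; rewrite cat_uniq inE => /and3P[Uc' _ UL].
by case/orP => [/eqP-> | /IHL]; auto.
Qed.

Lemma uniq_flatten_mem_eq L c1 c2 x : uniq (flatten L) ->
  c1 \in L -> c2 \in L -> x \in c1 -> x \in c2 -> c1 = c2.
Proof.
elim: L => [|c L IHL] //=; rewrite cat_uniq !inE => /and3P[_ /hasPn cL UL].
have x_cL c' : c' \in L -> x \in c' -> x \notin c.
  by move=> c'L xc'; apply: cL; apply/flattenP; exists c'.
case/orP => [/eqP-> | c1L] /orP[/eqP-> | c2L] x1 x2 //; last exact: IHL.
- by rewrite (negPf (x_cL _ c2L x2)) in x1.
- by rewrite (negPf (x_cL _ c1L x1)) in x2.
Qed.

Definition blocks_next L x : T :=
  foldr (fun c y => if x \in c then next c x else y) x L.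

Lemma blocks_nextE L c x : uniq (flatten L) ->
  c \in L -> x \in c -> blocks_next L x = next c x.
Proof.
move=> UL cL xc; elim: L UL cL => [|c' L IHL] //= UL cL.
case: ifP => xc'; first by rewrite (@uniq_flatten_mem_eq (c' :: L) c' c x) ?mem_head.
move: cL; rewrite inE => /orP[/eqP c_c' | cL]; first by rewrite -c_c' xc in xc'.
by apply: IHL cL; move: UL; rewrite cat_uniq => /and3P[].
Qed.

Lemma blocks_next_inj L : uniq (flatten L) -> (forall x, x \in flatten L) ->
  injective (blocks_next L).
Proof.
move=> UL cover x y.
case/flattenP: (cover x) => cx cxL xcx; case/flattenP: (cover y) => cy cyL ycy.
rewrite (blocks_nextE UL cxL xcx) (blocks_nextE UL cyL ycy) => exy.
have cx_cy : cx = cy.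
  by apply: (uniq_flatten_mem_eq (x := next cx x) UL cxL cyL); rewrite ?mem_next // exy mem_next.
rewrite cx_cy in exy; exact: can_inj (prev_next (uniq_flatten_mem UL cyL)) _ _ exy.
Qed.

End Blocks.

Section FunGraph.
Variable T : finType.
Implicit Types (s t u v : T) (f : T -> T).

(* The functional graph of [f] with the edge leaving [t] removed; for a
   permutation, this opens the cycle through [t] into a path from [f t] to [t]. *)
Definition fun_graph t f : {set T * T} := [set (u, f u) | u in [set~ t]].

Lemma mem_fun_graph t f u v : ((u, v) \in fun_graph t f) = (u != t) && (v == f u).
Proof.
apply/imsetP/andP => [[w] | [ut /eqP->]]; last by exists u; rewrite ?inE.
by rewrite !inE => wt [-> ->].
Qed.

Lemma eq_fun_graph t f g : f =1 g -> fun_graph t f = fun_graph t g.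
Proof. by move=> fg; apply: eq_imset => u; rewrite fg. Qed.

Lemma path_cycles_edges s p (cs : seq (seq T)) :
  uniq (flatten ((s :: p) :: cs)) -> (forall x, x \in flatten ((s :: p) :: cs)) ->
  [set e | (e \in path_edges (s :: p)) || has (fun c => e \in cycle_edges c) cs] =
  fun_graph (last s p) (blocks_next ((s :: p) :: cs)).
Proof.
set L := (s :: p) :: cs => UL cover; apply/setP => -[u v].
have csL c : c \in cs -> c \in L by rewrite inE => ->; rewrite orbT.
have Ucs c : c \in cs -> uniq c by move/csL; apply: uniq_flatten_mem.
have p_cs x : x \in s :: p -> x \notin flatten cs.
  have : uniq ((s :: p) ++ flatten cs) := UL.
  rewrite cat_uniq => /and3P[_ disj _] xp.
  by apply: contraL disj => xcs; rewrite negbK; apply/hasP; exists x.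
rewrite in_set mem_fun_graph mem_path_edges ?(uniq_flatten_mem UL (mem_head _ _)) //.
have [c cL uc] := flattenP (cover u); rewrite (blocks_nextE UL cL uc).
have -> : has (fun c' => (u, v) \in cycle_edges c') cs = (c \in cs) && (v == next c u).
  apply/hasP/andP => [[c' c'cs] | [ccs vE]]; last by exists c; rewrite ?mem_cycle_edges ?uc ?Ucs.
  rewrite mem_cycle_edges ?Ucs // => /andP[uc' vE].
  by rewrite (uniq_flatten_mem_eq UL cL (csL _ c'cs) uc uc').
move: cL; rewrite [_ \in L]inE => /orP[/eqP c_p | ccs].
  suff /negPf-> : c \notin cs by rewrite -c_p uc andFb orbF.
  apply: contraL (p_cs s (mem_head s p)) => ccs.
  by rewrite negbK; apply/flattenP; exists c; rewrite // c_p mem_head.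
have u_cs : u \in flatten cs by apply/flattenP; exists c.
have u_p : u \notin s :: p by apply: contraL u_cs; apply: p_cs.
rewrite (negPf u_p) ccs /= andb_idl // => _.
by apply: contraNneq u_p => ->; apply: mem_last.
Qed.

End FunGraph.

Lemma uniq_flatten_orbits (T : finType) (f : T -> T) (R : seq T) : injective f ->
  uniq R -> {in R &, forall x y, fconnect f x y -> x = y} ->
  uniq (flatten [seq fingraph.orbit f x | x <- R]).
Proof.
move=> f_inj; elim: R => [|x R IHR] //= /andP[xR UR] Rconn.
rewrite cat_uniq orbit_uniq IHR ?andbT //=; last first.
  by move=> y z yR zR; apply: Rconn; rewrite inE ?yR ?zR orbT.
apply/hasPn => y /flattenP[_ /mapP[z zR ->] yz]; rewrite -!fconnect_orbit in yz *.
apply: contraNN xR => xy; rewrite (Rconn x z) ?mem_head ?inE ?zR ?orbT //.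
by apply: connect_trans xy _; rewrite fconnect_sym.
Qed.

Lemma path_cycle_graph_perm n (E : {set 'I_n * 'I_n}) s t :
  path_cycle_graph E s t -> exists sg : 'S_n, sg t = s /\ E = fun_graph t sg.
Proof.
case=> q [cs [perm_L [p [q_def <-]] _ ->]]; subst q; set L := (s :: p) :: cs.
have UL : uniq (flatten L) by have := enum_uniq 'I_n; rewrite -(perm_uniq perm_L).
have cover x : x \in flatten L by rewrite [_ \in _](perm_mem perm_L) mem_enum.
exists (perm (blocks_next_inj UL cover)); split.
  rewrite permE (blocks_nextE UL (mem_head _ _) (mem_last s p)).
  by rewrite next_last // (uniq_flatten_mem UL (mem_head _ _)).
by rewrite path_cycles_edges //; apply: eq_fun_graph => u; rewrite permE.
Qed.

Lemma fun_graph_path_cycle n (sg : 'S_n) s t :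
  sg t = s -> path_cycle_graph (fun_graph t sg) s t.
Proof.
move=> sg_t; have sg_inj := @perm_inj _ sg.
have symf : connect_sym (frel sg) := fconnect_sym sg_inj.
pose R := [seq x <- enum 'I_n | (froot sg x == x) && ~~ fconnect sg s x].
have [p orbit_s] : exists p, fingraph.orbit sg s = s :: p.
  by exists (traject sg (sg s) (fingraph.order sg s).-1); rewrite /fingraph.orbit -orderSpred.
set L := (s :: p) :: [seq fingraph.orbit sg x | x <- R].
have L_orbits : L = [seq fingraph.orbit sg x | x <- s :: R] by rewrite /= orbit_s.
have UL : uniq (flatten L).
  rewrite L_orbits; apply: uniq_flatten_orbits => //.
    by rewrite /= mem_filter connect0 andbF filter_uniq ?enum_uniq.
  have inR x : x \in R -> froot sg x = x /\ ~~ fconnect sg s x.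
    by rewrite mem_filter => /andP[/andP[/eqP-> ->] _].
  move=> x y; rewrite !inE => /predU1P[-> | /inR[rx sx]] /predU1P[-> | /inR[ry sy]] //.
  - by move=> sy'; rewrite sy' in sy.
  - by rewrite symf => sx'; rewrite sx' in sx.
  - by rewrite -(root_connect symf) rx ry => /eqP.
have cover y : y \in flatten L.
  rewrite L_orbits; apply/flattenP; case: (boolP (fconnect sg s y)) => sy.
    by exists (fingraph.orbit sg s); rewrite ?mem_head -?fconnect_orbit.
  exists (fingraph.orbit sg (froot sg y)); last by rewrite -fconnect_orbit symf connect_root.
  apply: map_f; rewrite inE mem_filter mem_enum (root_root symf) eqxx andbT /=.
  by apply/orP; right; apply: contra sy => s_ry; apply: connect_trans s_ry _; rewrite symf connect_root.
have sg_next c x : c \in L -> x \in c -> blocks_next L x = sg x.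
  move=> cL xc; rewrite (blocks_nextE UL cL xc); move: cL xc.
  rewrite L_orbits => /mapP[z _ ->].
  by apply: nextE; apply: cycle_orbit.
have last_t : last s p = t.
  have Up : uniq (s :: p) by rewrite -orbit_s orbit_uniq.
  apply: (can_inj (prev_next Up)); rewrite next_last // -orbit_s.
  by rewrite (nextE (cycle_orbit sg_inj s)) // -fconnect_orbit symf -sg_t fconnect1.
exists (s :: p), [seq fingraph.orbit sg x | x <- R]; split.
- by apply: uniq_perm UL (enum_uniq _) _ => x; rewrite mem_enum; apply: cover.
- by exists p.
- by apply/allP => _ /mapP[x _ ->]; have := in_orbit sg x; case: fingraph.orbit.
rewrite path_cycles_edges // last_t; apply: eq_fun_graph => u.
by have [c cL uc] := flattenP (cover u); rewrite (sg_next c).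
Qed.

Section Components.
Variable T : finType.

(* Removing the edge [t -> f t] does not disconnect its endpoints: the rest of
   the cycle through [t] still joins them. *)
Lemma connect_cycle_cut (e : rel T) (f : T -> T) t : injective f ->
  (forall u, u != t -> e u (f u)) -> connect e (f t) t.
Proof.
move=> f_inj e_f; have ft_t : fconnect f (f t) t by rewrite fconnect_sym // fconnect1.
have k_lt := findex_max ft_t; set k := findex f (f t) t in k_lt.
suff conn j : j <= k -> connect e (f t) (iter j f (f t)).
  by rewrite -{2}(iter_findex ft_t); apply: conn.
elim: j => [_ | j IHj lt_jk]; first exact: connect0.
apply: connect_trans (IHj (ltnW lt_jk)) (connect1 _); rewrite iterS; apply: e_f.
apply: contraTneq (lt_jk) => jt; have := findex_iter (ltn_trans lt_jk k_lt).
by rewrite jt -/k => ->; rewrite ltnn.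
Qed.

Lemma mem_porbitE (sg : {perm T}) x y : (y \in porbit sg x) = fconnect sg x y.
Proof.
apply/porbitP/idP => [[i ->] | xy]; first by rewrite permX fconnect_iter.
by exists (findex sg x y); rewrite permX iter_findex.
Qed.

Lemma card_porbits (sg : {perm T}) : #|porbits sg| = n_comp (frel sg) T.
Proof.
have symf : connect_sym (frel sg) := fconnect_sym (@perm_inj _ sg).
have -> : porbits sg = porbit sg @: [set x | froots sg x].
  apply/setP => P; apply/imsetP/imsetP => [[x _ ->] | [x _ ->]]; last by exists x.
  exists (froot sg x); first by rewrite inE /roots (root_root symf).
  by apply/eqP; rewrite eq_porbit_mem mem_porbitE symf connect_root.
rewrite card_in_imset => [|x y]; first by rewrite cardsE; apply: eq_card => x; rewrite !inE andbT.
rewrite !inE => /eqP rx /eqP ry /eqP; rewrite eq_porbit_mem mem_porbitE.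
by rewrite -(root_connect symf) rx ry => /eqP.
Qed.

End Components.

Lemma ncomponents_fun_graph n (t : 'I_n) (sg : 'S_n) :
  ncomponents (fun_graph t sg) = #|porbits sg|.
Proof.
have symf : connect_sym (frel sg) := fconnect_sym (@perm_inj _ sg).
have wsym : connect_sym (wadj (fun_graph t sg)).
  by apply: sym_connect_sym => u v; rewrite /wadj orbC.
have step u : u != t -> wadj (fun_graph t sg) u (sg u).
  by move=> ut; rewrite /wadj mem_fun_graph ut eqxx.
have eq_conn : connect (wadj (fun_graph t sg)) =2 fconnect sg.
  move=> x y; apply/idP/idP; apply: connect_sub => u v.
    rewrite /wadj !mem_fun_graph => /orP[] /andP[_ /eqP->]; last rewrite symf;
    exact: fconnect1.
  move/eqP=> <-; have [-> | ut] := eqVneq u t; last exact/connect1/step.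
  by rewrite wsym; apply: connect_cycle_cut (@perm_inj _ sg) step.
by rewrite /ncomponents (eq_n_comp eq_conn) card_porbits.
Qed.

Local Open Scope ring_scope.

Lemma sign_odd_perm (R : comPzRingType) (T : finType) (sg : {perm T}) :
  (0 < #|T|)%N -> (-1) ^+ sg * (-1) ^+ #|T|.-1 = (-1) ^+ #|porbits sg|.-1 :> R.
Proof.
move=> T_gt0; have : (0 < #|porbits sg|)%N.
  case/card_gt0P: T_gt0 => x _; rewrite card_gt0; apply/set0Pn.
  by exists (porbit sg x); apply: imset_f.
rewrite /odd_perm; case: #|porbits sg| => // k _; move: T_gt0.
case: #|T| => // m _ /=.
by rewrite signr_addb !signrN !signr_odd mulrNN mulrAC -mulrA signrMK.
Qed.

Section RankOneUpdate.
Variables (R : comPzRingType) (n : nat).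
Implicit Types (J : {set 'I_n}) (M : 'M[R]_n) (a b : 'cV[R]_n) (v : 'rV[R]_n).

Definition row_subst (J : {set 'I_n}) v M : 'M[R]_n :=
  \matrix_(i, j) if i \in J then v 0 j else M i j.

Lemma det_add_outer_subsets M a b :
  \det (a *m b^T + M) =
  \sum_(J : {set 'I_n}) (\prod_(i in J) a i 0) * \det (row_subst J b^T M).
Proof.
have -> : a *m b^T + M = \matrix_(i, j) (a i 0 * b j 0 + M i j).
  by apply/matrixP => i j; rewrite !mxE big_ord1 !mxE.
rewrite /(\det _); transitivity (\sum_(sg : 'S_n) \sum_(J : {set 'I_n})
    (-1) ^+ sg * ((\prod_(i in J) a i 0) * \prod_i row_subst J b^T M i (sg i))).
  apply: eq_bigr => sg _; rewrite -mulr_sumr; congr (_ * _).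
  rewrite (eq_bigr (fun i => a i 0 * b (sg i) 0 + M i (sg i))) => [|i _]; last by rewrite mxE.
  rewrite bigA_distr; apply: eq_bigr => J _.
  rewrite (big_mkcond (mem J)) -big_split /=; apply: eq_bigr => i _.
  by rewrite !mxE; case: (i \in J); rewrite ?mul1r.
rewrite exchange_big; apply: eq_bigr => J _; rewrite mulr_sumr.
by apply: eq_bigr => sg _; rewrite mulrCA.
Qed.

Lemma det_row_subst_gt1 J v M : (1 < #|J|)%N -> \det (row_subst J v M) = 0.
Proof.
case/card_gt1P => x [y [xJ yJ xy]].
by apply: (determinant_alternate xy) => j; rewrite !mxE xJ yJ.
Qed.

Lemma det_add_outer M a b :
  \det (a *m b^T + M) = \det M + \sum_t a t 0 * \det (row_subst [set t] b^T M).
Proof.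
rewrite det_add_outer_subsets (bigD1 set0) //= big_set0 mul1r; congr (_ + _).
  by congr (\det _); apply/matrixP => i j; rewrite !mxE in_set0.
rewrite (bigID (fun J : {set 'I_n} => #|J| == 1%N)) /= [X in _ + X]big1 ?addr0; last first.
  move=> J /andP[J0 J1]; rewrite det_row_subst_gt1 ?mulr0 //.
  by rewrite ltn_neqAle eq_sym J1 card_gt0.
rewrite (eq_bigl (mem (set1 @: [set: 'I_n]))) => [|J]; last first.
  apply/andP/imsetP => [[_ /cards1P[x ->]] | [x _ ->]]; first by exists x.
  by rewrite cards1; split=> //; apply/set0Pn; exists x; rewrite inE.
rewrite big_imset /= => [|x y _ _]; last exact: set1_inj.
by apply: eq_big => [t | t _]; rewrite ?inE ?big_set1.
Qed.

Lemma det_row_subst1 t v M :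
  \det (row_subst [set t] v M) =
  \sum_s v 0 s * \sum_(sg : 'S_n | sg t == s) (-1) ^+ sg * \prod_(i | i != t) M i (sg i).
Proof.
rewrite /(\det _) (partition_big (fun sg : 'S_n => sg t) xpredT) //=.
apply: eq_bigr => s _; rewrite mulr_sumr; apply: eq_bigr => sg /eqP <-.
rewrite (bigD1 t) //= mulrCA !mxE set11; congr (_ * (_ * _)).
by apply: eq_bigr => i it; rewrite !mxE in_set1 (negPf it).
Qed.

End RankOneUpdate.

Lemma fun_graph_perm_inj (T : finType) (s t : T) :
  {in [set sg : {perm T} | sg t == s] &, injective (fun sg : {perm T} => fun_graph t sg)}.
Proof.
move=> sg sg'; rewrite !inE => /eqP sg_t /eqP sg'_t eq_g; apply/permP => i.
have [-> | it] := eqVneq i t; first by rewrite sg_t sg'_t.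
have : (i, sg i) \in fun_graph t sg' by rewrite -eq_g mem_fun_graph it eqxx.
by rewrite mem_fun_graph => /andP[_ /eqP].
Qed.

Lemma prod_fun_graph (R : comPzRingType) (T : finType) (F : T -> T -> R) t f :
  \prod_(e in fun_graph t f) F e.1 e.2 = \prod_(u in [set~ t]) F u (f u).
Proof. by rewrite (big_imset (fun e => F e.1 e.2)) => [|u v _ _ []]. Qed.

Lemma path_cycle_graphP n (E : {set 'I_n * 'I_n}) s t :
  reflect (path_cycle_graph E s t) (path_cycle_graphb E s t).
Proof.
by rewrite /path_cycle_graphb; case: ClassicalEpsilon.excluded_middle_informative; constructor.
Qed.

Lemma perm_sum_path_cycle_graphs (R : comPzRingType) n (C : 'M[R]_n) s t :
  \sum_(sg : 'S_n | sg t == s) (-1) ^+ sg * \prod_(i | i != t) (- C) i (sg i) =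
  \sum_(E : {set 'I_n * 'I_n})
    (if path_cycle_graphb E s t
     then (-1) ^+ ncycles E * \prod_(e in E) C e.1 e.2 else 0).
Proof.
set A := [set sg : 'S_n | sg t == s].
rewrite (bigID (mem ((fun sg : 'S_n => fun_graph t sg) @: A))) /= [X in _ = _ + X]big1 ?addr0 => [|E]; last first.
  case: path_cycle_graphP => // /path_cycle_graph_perm[sg [sg_t ->]] /negP[].
  by apply: imset_f; rewrite inE sg_t.
rewrite big_imset /= => [|]; last exact: fun_graph_perm_inj.
apply: eq_big => [sg | sg /eqP sg_t]; first by rewrite inE.
have /path_cycle_graphP -> := fun_graph_path_cycle sg_t.
rewrite /ncycles ncomponents_fun_graph prod_fun_graph.
rewrite (eq_bigr (fun i => - C i (sg i))) => [|i _]; last by rewrite mxE.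
rewrite (eq_bigl (mem [set~ t])) => [|i]; last by rewrite !inE.
rewrite prodrN mulrA cardsC1 card_ord -sign_odd_perm ?card_ord //.
by case: n {C A s sg sg_t} t => // -[].
Qed.

Theorem lemmaA4 (R : comPzRingType) (n : nat) (C : 'M[R]_n) (a b : 'cV[R]_n) :
  \det (a *m b^T - C) =
  \det (- C) +
  \sum_(E : {set 'I_n * 'I_n}) \sum_(s : 'I_n) \sum_(t : 'I_n)
     (if path_cycle_graphb E s t
      then (-1) ^+ ncycles E * b s ord0 * a t ord0 * \prod_(e in E) C e.1 e.2
      else 0).
Proof.
rewrite det_add_outer; congr (_ + _).
under [RHS]eq_bigr do rewrite exchange_big.
rewrite exchange_big; apply: eq_bigr => t _.
rewrite exchange_big det_row_subst1 mulr_sumr; apply: eq_bigr => s _.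
rewrite perm_sum_path_cycle_graphs !mulr_sumr; apply: eq_bigr => E _.
case: ifP => _; last by rewrite !mulr0.
by rewrite mxE mulrCA [a t 0 * _]mulrCA !mulrA [_ * b s 0]mulrC.
Qed.
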